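(* The graphs $\mathbf{X}_6$ and $\mathbf{X}_7$ are not block decomposable. In particular, they are not of geometric type (they do not arise from triangulations of bordered oriented surfaces with marked points).
   Context: A graph here is a finite directed multigraph with no loops and no oriented $2$-cycles. $\mathbf{X}_6$: vertices $x,w,y_1,z_1,y_2,z_2$; for $i=1,2$: two arrows $y_i\to z_i$, one arrow $z_i\to x$, one arrow $x\to y_i$; plus one arrow $w\to x$. $\mathbf{X}_7$: vertices $x,y_i,z_i$ ($i=1,2,3$); for each $i$: two arrows $y_i\to z_i$, one arrow $z_i\to x$, one arrow $x\to y_i$. Blocks: each block is a small graph whose vertices are marked either open or closed; all arrows single. I: open $a\to$ open $b$. II: open vertices $a,b,c$ with $a\to b\to c\to a$. IIIa: open $o$ and closed $s_1,s_2$ with $s_1\to o$, $s_2\to o$. IIIb: open $o$ and closed $s_1,s_2$ with $o\to s_1$, $o\to s_2$. IV: open $l,r$, closed $t,s$, arrows $l\to t$, $t\to r$, $l\to s$, $s\to r$, $r\to l$. V: open $c$, closed $A,B,C,D$, arrows $A\to c$, $c\to B$, $B\to A$, $c\to C$, $C\to D$, $D\to c$, $B\to D$, $C\to A$. A graph is block decomposable if it can be obtained as follows: take a disjoint union of finitely many blocks (each type may occur any number of times), choose a partial matching of the open vertices in which no vertex is matched to a vertex of the same block, identify matched vertices, and then, whenever two vertices $u,v$ have an arrow $u\to v$ and an arrow $v\to u$, delete both arrows (repeating until no such pairs remain). A graph is called of geometric type if it comes from a triangulation of a bordered oriented surface with marked points in the sense of Fomin–Shapiro–Thurston; by their work this is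 equivalent to being block decomposable. *)

From mathcomp Require Import all_boot.
Set Implicit Arguments. Unset Strict Implicit. Unset Printing Implicit Defensive.

(** A graph: finite vertex type, [arr u v] = number of arrows u -> v. *)
Record graph := Graph { gV : finType; garr : gV -> gV -> nat }.

Definition is_graph (G : graph) : Prop :=
  (forall v : gV G, garr v v = 0) /\ (forall u v : gV G, garr u v = 0 \/ garr v u = 0).

Inductive btype := BI | BII | BIIIa | BIIIb | BIV | BV.

Definition bsize (k : btype) : nat :=
  match k with BI => 2 | BII => 3 | BIIIa => 3 | BIIIb => 3 | BIV => 4 | BV => 5 end.

(* I: a=0,b=1.  II: a=0,b=1,c=2.  IIIa/IIIb: o=0,s1=1,s2=2.
   IV: l=0,r=1,t=2,s=3.  V: c=0,A=1,B=2,C=3,D=4. *)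
Definition bopen (k : btype) (i : nat) : bool :=
  match k with
  | BI | BII => true
  | BIIIa | BIIIb => i == 0
  | BIV => i < 2
  | BV => i == 0
  end.

Definition barrows (k : btype) : seq (nat * nat) :=
  match k with
  | BI => [:: (0,1)]
  | BII => [:: (0,1); (1,2); (2,0)]
  | BIIIa => [:: (1,0); (2,0)]
  | BIIIb => [:: (0,1); (0,2)]
  | BIV => [:: (0,2); (2,1); (0,3); (3,1); (1,0)]
  | BV => [:: (1,0); (0,2); (2,1); (0,3); (3,4); (4,0); (2,4); (3,1)]
  end.

Definition barr (k : btype) (i j : nat) : nat := count_mem (i, j) (barrows k).

Definition uvert (n : nat) (t : 'I_n -> btype) : finType :=
  {i : 'I_n & 'I_(bsize (t i))}.

Definition uopen n (t : 'I_n -> btype) (p : uvert t) : bool :=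
  bopen (t (tag p)) (val (tagged p)).

Definition uarr n (t : 'I_n -> btype) (p q : uvert t) : nat :=
  if tag p == tag q then barr (t (tag p)) (val (tagged p)) (val (tagged q)) else 0.

(** G is block decomposable: there are finitely many blocks (types t) and a
    surjective identification map f from the disjoint union onto the vertices
    of G, whose fibres have size 1 or 2, a fibre of size 2 consisting of two
    open vertices from different blocks (this is exactly the quotient by a
    partial matching of open vertices, up to isomorphism); and the arrows of G
    are those of the identified graph after cancelling all pairs of opposite
    arrows, i.e. arr u v = (#arrows u->v) - (#arrows v->u) (truncated). *)
Definition block_decomposable (G : graph) : Prop :=
  exists (n : nat) (t : 'I_n -> btype) (f : uvert t -> gV G),
    [/\ forall x : gV G, 0 < #|[set p | f p == x]| <= 2,
        forall p q : uvert t, p != q -> f p = f q ->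
          [&& uopen p, uopen q & tag p != tag q]
      & forall u v : gV G,
          garr u v =
            (\sum_(p | f p == u) \sum_(q | f q == v) uarr p q) -
            (\sum_(p | f p == v) \sum_(q | f q == u) uarr p q)].

(** X6: x=0, w=1, y1=2, z1=3, y2=4, z2=5. *)
Definition arrX6 (a b : 'I_6) : nat :=
  match val a, val b with
  | 2, 3 => 2 | 4, 5 => 2
  | 3, 0 => 1 | 5, 0 => 1
  | 0, 2 => 1 | 0, 4 => 1
  | 1, 0 => 1
  | _, _ => 0
  end.
Definition X6 : graph := @Graph 'I_6 arrX6.

(** X7: x=0, y1=1, z1=2, y2=3, z2=4, y3=5, z3=6. *)
Definition arrX7 (a b : 'I_7) : nat :=
  match val a, val b with
  | 1, 2 => 2 | 3, 4 => 2 | 5, 6 => 2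
  | 2, 0 => 1 | 4, 0 => 1 | 6, 0 => 1
  | 0, 1 => 1 | 0, 3 => 1 | 0, 5 => 1
  | _, _ => 0
  end.
Definition X7 : graph := @Graph 'I_7 arrX7.

From mathcomp Require Import all_boot.
From mathcomp Require Import zify.
Set Implicit Arguments. Unset Strict Implicit. Unset Printing Implicit Defensive.

(* A double arrow y => z can only come from two different blocks, each
   containing an arrow y -> z, so both y and z are glued from open vertices
   of two blocks.  The arrow x -> y is then produced inside one of these
   blocks, which therefore holds open vertices over y and z and some vertex
   over x.  A block with three open vertices has only three vertices.  In X7
   this forces the three pairs (y_i, z_i) to hang off three different vertices
   over x, but a fibre has at most two points.  In X6 the two vertices over x
   are distinct, hence open, and the block producing w -> x would be a block
   with open vertices over y_i, z_i, x and a fourth vertex over w. *)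

Lemma sum_nat_gt0P (I : finType) (P : pred I) (F : I -> nat) :
  reflect (exists2 i, P i & 0 < F i) (0 < \sum_(i | P i) F i).
Proof.
rewrite lt0n sum_nat_eq0.
by apply: (iffP forall_inPn) => -[i Pi Fi]; exists i; rewrite // lt0n in Fi *.
Qed.

Lemma sum_le1_gt1 (I : finType) (P : pred I) (F : I -> nat) :
  (forall i, F i <= 1) -> 1 < \sum_(i | P i) F i ->
  exists i j, [/\ P i, P j, i != j, 0 < F i & 0 < F j].
Proof.
move=> F_le1 sum_gt1.
have /sum_nat_gt0P[i Pi Fi_gt0] := ltnW sum_gt1.
move: sum_gt1; rewrite (bigD1 i) //= => sum_gt1.
have /sum_nat_gt0P[j /andP[Pj ji] Fj_gt0] :
    0 < \sum_(j | P j && (j != i)) F j by have := F_le1 i; lia.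
by exists i, j; rewrite eq_sym.
Qed.

Lemma barr_le1 k i j : barr k i j <= 1.
Proof. by rewrite /barr count_uniq_mem ?leq_b1 //; case: k. Qed.

Lemma uarr_le1 n (t : 'I_n -> btype) (p q : uvert t) : uarr p q <= 1.
Proof. by rewrite /uarr; case: ifP => // _; apply: barr_le1. Qed.

Lemma uarr_gt0_tag n (t : 'I_n -> btype) (p q : uvert t) :
  0 < uarr p q -> tag p = tag q.
Proof. by rewrite /uarr; case: eqP. Qed.

Lemma three_open_block k (i j l : 'I_(bsize k)) :
  uniq [:: i; j; l] -> bopen k i -> bopen k j -> bopen k l -> bsize k = 3.
Proof.
rewrite /= !inE !negb_or -!val_eqE andbT.
by case: k i j l => -[i +] [j +] [l +] /=; rewrite /bsize; lia.
Qed.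

Lemma three_open_block_no_fourth n (t : 'I_n -> btype) (a b c d : uvert t) :
  tag b = tag a -> tag c = tag a -> tag d = tag a -> uniq [:: a; b; c; d] ->
  uopen a -> uopen b -> uopen c -> False.
Proof.
case: a b c d => [i a] [ib b] [ic c] [id d] /= ? ? ?; subst.
move=> /(@map_uniq _ _ (Tagged (fun j => 'I_(bsize (t j)))) [:: a; b; c; d]).
move=> abcd_uniq; rewrite /uopen /= => oa ob oc.
have abc_uniq : uniq [:: a; b; c].
  move: abcd_uniq; rewrite -[[:: a; b; c; d]]/([:: a; b; c] ++ [:: d]).
  by rewrite cat_uniq => /andP[].
have size_le : size [:: a; b; c; d] <= bsize (t i).
  by rewrite -(card_uniqP abcd_uniq) -[X in _ <= X]card_ord max_card.
by have := three_open_block abc_uniq oa ob oc; move: size_le => /=; lia.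
Qed.

Section Decomposition.

Variables (G : graph) (n : nat) (t : 'I_n -> btype) (f : uvert t -> gV G).

Definition is_decomposition :=
  [/\ forall x : gV G, 0 < #|[set p | f p == x]| <= 2,
      forall p q : uvert t, p != q -> f p = f q ->
        [&& uopen p, uopen q & tag p != tag q]
    & forall u v : gV G,
        garr u v =
          (\sum_(p | f p == u) \sum_(q | f q == v) uarr p q) -
          (\sum_(p | f p == v) \sum_(q | f q == u) uarr p q)].

Definition open_pair_at (r p q : uvert t) :=
  [/\ tag p = tag r, tag q = tag r, uopen p & uopen q].

Lemma open_pair_open_apex_no_fourth r p q s :
  open_pair_at r p q -> uopen r -> tag s = tag r ->
  uniq [:: f p; f q; f r; f s] -> False.
Proof.
case=> tp tq op oq or ts /(@map_uniq _ _ f [:: p; q; r; s]) pqrs_uniq.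
by apply: (three_open_block_no_fourth _ _ _ pqrs_uniq op oq or); congruence.
Qed.

Lemma open_pairs_apart r p q r' p' q' :
  open_pair_at r p q -> open_pair_at r' p' q' ->
  uniq [:: f p; f q; f p'; f q'] -> r != r'.
Proof.
case=> tp tq op oq [tp' tq' op' _].
move=> /(@map_uniq _ _ f [:: p; q; p'; q']) pqpq_uniq.
apply/eqP=> rr'; subst r'.
by apply: (three_open_block_no_fourth _ _ _ pqpq_uniq op oq op'); congruence.
Qed.

Hypothesis decomp : is_decomposition.

Lemma glued_open p q u :
  f p = u -> f q = u -> p != q -> [&& uopen p, uopen q & tag p != tag q].
Proof. by case: decomp => _ glued _ <- fq pq; apply: glued. Qed.

Lemma fibre_no_three a b c u :
  f a = u -> f b = u -> f c = u -> a != b -> b != c -> c != a -> False.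
Proof.
case: decomp => /(_ u) /andP[_ card_le2] _ _ fa fb fc ab bc ca.
move: card_le2; rewrite leqNgt => /negP; apply; apply/card_gt2P.
by exists a, b, c; rewrite !inE fa fb fc eqxx.
Qed.

Lemma fibre_pair a b c u :
  f a = u -> f b = u -> f c = u -> a != b -> c = a \/ c = b.
Proof.
move=> fa fb fc ab.
have [-> | ca] := eqVneq c a; first by left.
have [-> | cb] := eqVneq c b; first by right.
by exfalso; apply: (fibre_no_three fa fb fc ab _ ca); rewrite eq_sym.
Qed.

Lemma arrow_lift u v :
  0 < garr u v -> exists p q, [/\ f p = u, f q = v & 0 < uarr p q].
Proof.
case: decomp => _ _ -> uv_gt0.
have /sum_nat_gt0P[p /eqP fp /sum_nat_gt0P[q /eqP fq pq]] :
  0 < \sum_(p | f p == u) \sum_(q | f q == v) uarr p q by lia.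
by exists p, q.
Qed.

Lemma arrows_into_fibre_le1 p v : \sum_(q | f q == v) uarr p q <= 1.
Proof.
rewrite leqNgt; apply/negP => /(sum_le1_gt1 (@uarr_le1 _ _ p)).
move=> [q1 [q2 [/eqP fq1 /eqP fq2 q12 /uarr_gt0_tag tq1 /uarr_gt0_tag tq2]]].
have /and3P[_ _] := glued_open fq1 fq2 q12.
by rewrite -tq1 -tq2 eqxx.
Qed.

Lemma double_arrow_open_pair x y z :
  garr y z = 2 -> 0 < garr x y ->
  exists r p q, [/\ f r = x, f p = y, f q = z & open_pair_at r p q].
Proof.
move=> yz2 xy_gt0.
have : 1 < \sum_(p | f p == y) \sum_(q | f q == z) uarr p q.
  by case: decomp yz2 => _ _ ->; lia.
move=> /(sum_le1_gt1 (arrows_into_fibre_le1 ^~ z)).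
move=> [p1 [p2 [/eqP fp1 /eqP fp2 p12]]].
move=> /sum_nat_gt0P[q1 /eqP fq1 /uarr_gt0_tag tq1].
move=> /sum_nat_gt0P[q2 /eqP fq2 /uarr_gt0_tag tq2].
have /and3P[op1 op2 t12] := glued_open fp1 fp2 p12.
have q12 : q1 != q2 by apply: contra t12 => /eqP q12; rewrite tq1 tq2 q12.
have /and3P[oq1 oq2 _] := glued_open fq1 fq2 q12.
have [r [p [fr fp /uarr_gt0_tag tr]]] := arrow_lift xy_gt0.
have [Ep | Ep] := fibre_pair fp1 fp2 fp p12; subst p.
- by exists r, p1, q1; split; rewrite // /open_pair_at -tq1 tr.
- by exists r, p2, q2; split; rewrite // /open_pair_at -tq2 tr.
Qed.

End Decomposition.

Lemma X7_not_block_decomposable : ~ block_decomposable X7.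
Proof.
move=> [n [t [f dec]]].
pose vert k (lt_k7 : k < 7) : gV X7 := Ordinal lt_k7.
have [r1 [p1 [q1 [fr1 fp1 fq1 P1]]]] := double_arrow_open_pair dec
  (x := vert 0 isT) (y := vert 1 isT) (z := vert 2 isT) erefl isT.
have [r2 [p2 [q2 [fr2 fp2 fq2 P2]]]] := double_arrow_open_pair dec
  (x := vert 0 isT) (y := vert 3 isT) (z := vert 4 isT) erefl isT.
have [r3 [p3 [q3 [fr3 fp3 fq3 P3]]]] := double_arrow_open_pair dec
  (x := vert 0 isT) (y := vert 5 isT) (z := vert 6 isT) erefl isT.
have r12 : r1 != r2.
  by apply: (open_pairs_apart (f := f) P1 P2); rewrite fp1 fq1 fp2 fq2.
have r23 : r2 != r3.
  by apply: (open_pairs_apart (f := f) P2 P3); rewrite fp2 fq2 fp3 fq3.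
have r31 : r3 != r1.
  by apply: (open_pairs_apart (f := f) P3 P1); rewrite fp3 fq3 fp1 fq1.
exact: (fibre_no_three dec fr1 fr2 fr3 r12 r23 r31).
Qed.

Lemma X6_not_block_decomposable : ~ block_decomposable X6.
Proof.
move=> [n [t [f dec]]].
pose vert k (lt_k6 : k < 6) : gV X6 := Ordinal lt_k6.
have [r1 [p1 [q1 [fr1 fp1 fq1 P1]]]] := double_arrow_open_pair dec
  (x := vert 0 isT) (y := vert 2 isT) (z := vert 3 isT) erefl isT.
have [r2 [p2 [q2 [fr2 fp2 fq2 P2]]]] := double_arrow_open_pair dec
  (x := vert 0 isT) (y := vert 4 isT) (z := vert 5 isT) erefl isT.
have r12 : r1 != r2.
  by apply: (open_pairs_apart (f := f) P1 P2); rewrite fp1 fq1 fp2 fq2.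
have /and3P[or1 or2 _] := glued_open dec fr1 fr2 r12.
have [s [r [fs fr /uarr_gt0_tag tsr]]] := arrow_lift dec
  (u := vert 1 isT) (v := vert 0 isT) isT.
have [Er | Er] := fibre_pair dec fr1 fr2 fr r12; subst r.
- apply: (open_pair_open_apex_no_fourth (f := f) P1 or1 tsr).
  by rewrite fp1 fq1 fr1 fs.
- apply: (open_pair_open_apex_no_fourth (f := f) P2 or2 tsr).
  by rewrite fp2 fq2 fr2 fs.
Qed.

Theorem mainTheorem3 :
  ~ block_decomposable X6 /\ ~ block_decomposable X7.
Proof. exact: (conj X6_not_block_decomposable X7_not_block_decomposable). Qed.
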